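(* The class of Subgraph MPNNs can count $3$-cycles, $4$-cycles, $2$-paths and $3$-paths at node level. That is, for $S$ any one of these substructures and for all node-graph pairs $(i_1,G_1),(i_2,G_2)$ with $C(S,i_1,G_1)\neq C(S,i_2,G_2)$, there exists a Subgraph MPNN whose node representations satisfy $h_{i_1}(G_1)\neq h_{i_2}(G_2)$.
   Context: Graphs are finite, simple, undirected, $G=(V,E)$, possibly carrying node attributes $x_v$ and edge attributes $e_{u,v}$ (a fixed constant when absent). $N(v)$ is the neighbour set of $v$. For $L\ge 1$, an $L$-path is a sequence of edges $(v_1,v_2),\dots,(v_L,v_{L+1})$ of $G$ with $v_1,\dots,v_{L+1}$ pairwise distinct; for $L\ge 3$, an $L$-cycle is such a sequence with $v_1,\dots,v_L$ pairwise distinct and $v_{L+1}=v_1$. Two paths (resp. cycles) are identified when their edge sets coincide. $C(L\text{-cycle},i,G)$ is the number of inequivalent $L$-cycles containing node $i$; $C(L\text{-path},i,G)$ is the number of inequivalent $L$-paths starting from $i$ (i.e. with $v_1=i$). A class $\mathcal F$ of functions on node-graph pairs can count $S$ at node level if for all $(i_1,G_1),(i_2,G_2)$ with $C(S,i_1,G_1)\ne C(S,i_2,G_2)$ there is $f\in\mathcal F$ with $f(i_1,G_1)\ne f(i_2,G_2)$. Subgraph MPNNs. A Subgraph MPNN is specified by: (1) a subgraph extraction rule, either node deletion, $(V_i,E_i)=(V\setminus\{i\},E\setminus\{(i,j):j\in N(i)\})$, or the $K$-hop ego-network for some integer $K\ge1$, i.e. $(V_i,E_i)$ is the subgraph of $G$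 induced by the nodes at shortest-path distance at most $K$ from $i$; (2) a node labeling $z_{i,j}$, which is either absent, identity labeling $z_{i,j}=\mathbb 1_{i=j}$, or shortest path distance $z_{i,j}=\mathrm{spd}(i,j)$; (3) a number of layers $T$ and arbitrary functions $M_t$ (with values in some $\mathbb R^{d_t}$) and $U_t$; (4) an arbitrary readout $R_{\text{node}}$ on finite multisets. For each root $i\in V$ and $j\in V_i$: $h^{(0)}_{i,j}=x_j\oplus z_{i,j}$, $h^{(t+1)}_{i,j}=U_t\big(h^{(t)}_{i,j},\sum_{k\in N_i(j)}M_t(h^{(t)}_{i,j},h^{(t)}_{i,k},e_{j,k})\big)$ with $N_i(j)=\{k\in V_i:(j,k)\in E_i\}$, and the node representation is $h_i=R_{\text{node}}(\{\!\{h^{(T)}_{i,j}:j\in V_i\}\!\})$. The node-level function computed is $(i,G)\mapsto h_i$; the class of Subgraph MPNNs consists of all such choices. *)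

From HB Require Import structures.
From mathcomp Require Import all_boot all_order all_algebra.
From mathcomp Require Import reals.
Set Implicit Arguments. Unset Strict Implicit. Unset Printing Implicit Defensive.
Import Order.TTheory GRing.Theory Num.Theory.
Local Open Scope ring_scope.

Record graph (R : realType) := Graph {
  V :> finType;
  adj : rel V;
  adj_sym : symmetric adj;
  adj_irr : irreflexive adj;
  xattr : V -> seq R;
  eattr : V -> V -> seq R;
  eattr_sym : forall u v, eattr u v = eattr v u }.
Arguments adj {R} g : rename.
Arguments xattr {R} g : rename.
Arguments eattr {R} g : rename.

Section Graphs.
Variables (R : realType) (G : graph R).

Fixpoint within (n : nat) (i j : V G) : bool :=
  match n with
  | 0 => i == j
  | n'.+1 => within n' i j || [exists k, within n' i k && adj G k j]
  end.

(** shortest path distance; None = infinite (unreachable). *)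
Definition spd (i j : V G) : option nat :=
  let n := find (fun n => within n i j) (iota 0 #|V G|.+1) in
  if (n <= #|V G|)%N then Some n else None.

Definition cycle_edges (L : nat) (f : {ffun 'I_L -> V G}) : {set {set V G}} :=
  [set [set f k; f (ordS k)] | k : 'I_L].

Definition is_cycle (L : nat) (f : {ffun 'I_L -> V G}) : bool :=
  (2 < L)%N && injectiveb f && [forall k : 'I_L, adj G (f k) (f (ordS k))].

Definition path_edges (L : nat) (f : {ffun 'I_L.+1 -> V G}) : {set {set V G}} :=
  [set [set f (widen_ord (leqnSn L) k); f (lift ord0 k)] | k : 'I_L].

Definition is_path (L : nat) (f : {ffun 'I_L.+1 -> V G}) : bool :=
  (0 < L)%N && injectiveb f &&
  [forall k : 'I_L, adj G (f (widen_ord (leqnSn L) k)) (f (lift ord0 k))].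

(** C(L-cycle, i, G): number of inequivalent L-cycles (identified by edge
    set) containing node i. *)
Definition count_cycles (L : nat) (i : V G) : nat :=
  #|[set E : {set {set V G}} | [exists f : {ffun 'I_L -> V G},
       [&& is_cycle f, [exists k, f k == i] & E == cycle_edges f]]]|.

Definition count_paths (L : nat) (i : V G) : nat :=
  #|[set E : {set {set V G}} | [exists f : {ffun 'I_L.+1 -> V G},
       [&& is_path f, f ord0 == i & E == path_edges f]]]|.

End Graphs.

Inductive substructure := Cycle of nat | Path of nat.

Definition count_sub (R : realType) (S : substructure) (G : graph R)
  (i : V G) : nat :=
  match S with
  | Cycle L => count_cycles L i
  | Path L => count_paths L i
  end.

Inductive extraction := NodeDeletion | EgoNet of nat.
Inductive labeling := NoLabel | IdLabel | SpdLabel.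

Definition extraction_ok (x : extraction) : Prop :=
  match x with NodeDeletion => True | EgoNet K => (1 <= K)%N end.

Record SubgraphMPNN (R : realType) := MkSubgraphMPNN {
  ext : extraction;
  ext_valid : extraction_ok ext;
  lab : labeling;
  T : nat;
  dim : nat -> nat;
  Msg : forall t : nat, seq R -> seq R -> seq R -> 'rV[R]_(dim t);
  Upd : forall t : nat, seq R -> 'rV[R]_(dim t) -> seq R;
  Rnode : seq (seq R) -> seq R;
  Rnode_perm : forall s1 s2, perm_eq s1 s2 -> Rnode s1 = Rnode s2 }.
Arguments ext {R} s : rename.
Arguments lab {R} s : rename.
Arguments T {R} s : rename.
Arguments dim {R} s : rename.
Arguments Msg {R} s : rename.
Arguments Upd {R} s : rename.
Arguments Rnode {R} s : rename.

Section Eval.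
Variables (R : realType) (N : SubgraphMPNN R) (G : graph R).

Definition in_sub (i j : V G) : bool :=
  match ext N with
  | NodeDeletion => j != i
  | EgoNet K => within K i j
  end.

Definition sub_adj (i j k : V G) : bool :=
  match ext N with
  | NodeDeletion => [&& adj G j k, j != i & k != i]
  | EgoNet K => [&& adj G j k, within K i j & within K i k]
  end.

(** node label z_{i,j}, encoded as a (possibly empty) real vector;
    infinite distance is encoded as -1. *)
Definition zlabel (i j : V G) : seq R :=
  match lab N with
  | NoLabel => [::]
  | IdLabel => [:: (i == j)%:R]
  | SpdLabel => [:: match spd i j with Some n => n%:R | None => -1 end]
  end.

Fixpoint hstate (t : nat) : V G -> V G -> seq R :=
  match t with
  | 0 => fun i j => xattr G j ++ zlabel i j
  | t'.+1 => fun i j =>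
      Upd N t' (hstate t' i j)
        (\sum_(k : V G | sub_adj i j k)
            Msg N t' (hstate t' i j) (hstate t' i k) (eattr G j k))
  end.

Definition node_rep (i : V G) : seq R :=
  Rnode N [seq hstate (T N) i j | j <- enum (in_sub i)].

End Eval.

Definition can_count_node (R : realType) (S : substructure) : Prop :=
  forall (G1 G2 : graph R) (i1 : V G1) (i2 : V G2),
    count_sub S i1 <> count_sub S i2 ->
    exists N : SubgraphMPNN R, node_rep N i1 <> node_rep N i2.

From mathcomp Require Import all_boot all_order all_algebra.
From mathcomp Require Import reals.
Set Implicit Arguments. Unset Strict Implicit. Unset Printing Implicit Defensive.
Import GRing.Theory Num.Theory.

(** A Subgraph MPNN on 3-hop ego-networks with identity labels computes in
    two rounds, at every node j of the ego-network of the root i, the numbers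
    l = [j = i], x = [j ~ i], d = deg j and y = #(N(i) ∩ N(j)) (d is the
    degree inside the ego-network, which is deg j wherever it is used).  The four
    counts at i are sums over j of polynomials in these numbers:
    sum x y = 2 C(3-cycle), sum (1 - l) y (y - 1) = 2 C(4-cycle),
    sum x (d - 1) = C(2-path) and sum (1 - l) y (d - 1 - x) = C(3-path);
    distinct counts therefore give distinct node representations.
    For the combinatorics, every cycle through i can be rotated to start at i,
    and a cycle (resp. path) starting at i is a tuple of vertices; each cycle
    edge set arises from exactly two such tuples (its two orientations), each
    path edge set from exactly one. *)

Lemma forall_ord_iota n (P : pred nat) :
  [forall k : 'I_n, P k] = all P (iota 0 n).
Proof.
apply/forallP/allP => [h m|h k]; last by apply: h; rewrite mem_iota ltn_ord.
by rewrite mem_iota => /andP[_ lt_mn]; apply: (h (Ordinal lt_mn)).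
Qed.

Lemma imset_ord_iota (T : finType) n (F : nat -> T) :
  [set F k | k : 'I_n] = [set:: [seq F m | m <- iota 0 n]].
Proof.
apply/setP => x; rewrite inE -val_enum_ord -map_comp.
by apply/imsetP/mapP => -[k _ ->]; exists k; rewrite ?mem_enum.
Qed.

Lemma nth_rot1 (T : Type) (x0 : T) s m : m < size s ->
  nth x0 (rot 1 s) m = nth x0 s (m.+1 %% size s).
Proof.
case: s => [//|x s] /=; rewrite ltnS rot1_cons nth_rcons leq_eqVlt.
case/orP=> [/eqP ->|lt_ms]; first by rewrite ltnn eqxx modnn.
by rewrite lt_ms modn_small.
Qed.

Section SeqFfun.
Variables (T : Type) (x0 : T).

Definition seq_ffun n (s : seq T) : {ffun 'I_n -> T} := [ffun k : 'I_n => nth x0 s k].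

Lemma seq_ffun_vals n (f : {ffun 'I_n.+1 -> T}) :
  f = seq_ffun n.+1 (f ord0 :: [seq f (inord m.+1) | m <- iota 0 n]).
Proof.
apply/ffunP => -[[|m] lt_mn]; rewrite ffunE /=; first by apply: congr1; apply: val_inj.
rewrite (nth_map 0) ?size_iota // nth_iota // add0n.
by apply: congr1; apply: val_inj; rewrite /= inordK.
Qed.

End SeqFfun.

Lemma injectiveb_seq_ffun (T : eqType) (x0 : T) n s : size s = n ->
  injectiveb (seq_ffun x0 n s) = uniq s.
Proof.
move=> <-; rewrite /injectiveb /dinjectiveb (eq_map (ffunE _)).
by rewrite -[in RHS](mkseq_nth x0 s) /mkseq -val_enum_ord -map_comp.
Qed.

Lemma set2_eqE (T : finType) (x y u v : T) :
  ([set x; y] == [set u; v]) = (x == u) && (y == v) || (x == v) && (y == u).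
Proof.
apply/eqP/idP => [xy_uv|/orP[/andP[/eqP-> /eqP->]|/andP[/eqP-> /eqP->]]]; last 2 first.
- by [].
- by rewrite setUC.
have xuv : x \in [set u; v] by rewrite -xy_uv set21.
have yuv : y \in [set u; v] by rewrite -xy_uv set22.
have uxy : u \in [set x; y] by rewrite xy_uv set21.
have vxy : v \in [set x; y] by rewrite xy_uv set22.
move: xuv yuv uxy vxy; rewrite !inE.
by do 4 case/orP=> /eqP ?; subst; rewrite ?eqxx ?orbT.
Qed.

Lemma card_double_cover (I J : finType) (S : {set I}) (phi : I -> J) (sigma : I -> I) :
  (forall t, t \in S -> sigma t \in S /\ sigma t != t) ->
  (forall t t', t \in S -> t' \in S -> phi t = phi t' -> t' = t \/ t' = sigma t) ->
  (forall t, t \in S -> phi (sigma t) = phi t) ->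
  #|S| = 2 * #|phi @: S|.
Proof.
move=> sigmaS fiber phi_sigma.
rewrite -sum1_card (partition_big_imset phi) /= mulnC -sum_nat_const.
apply: eq_bigr => _ /imsetP[t0 St0 ->].
have [sigmaSt0 sigma_neq] := sigmaS t0 St0.
rewrite (eq_bigl (mem [set t0; sigma t0])) ?sum1_card ?cards2 1?eq_sym ?sigma_neq //.
move=> t; rewrite !inE; apply/andP/orP => [[St /eqP e]|[/eqP->|/eqP->]].
- by case: (fiber t0 t St0 St (esym e)) => ->; rewrite eqxx; [left|right].
- by rewrite eqxx.
- by rewrite sigmaSt0 phi_sigma // eqxx.
Qed.

Lemma card_dep_pairs (A B : finType) (P : A -> B -> bool) :
  #|[set t : A * B | P t.1 t.2]| = \sum_a #|[set b | P a b]|.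
Proof.
rewrite -sum1_card (eq_bigr (fun a => \sum_(b | P a b) 1)) => [|a _]; last first.
  by rewrite -sum1_card; apply: eq_bigl => b; rewrite inE.
by rewrite pair_big_dep /=; apply: eq_bigl => -[a b]; rewrite inE.
Qed.

Lemma sum_nat_const_on (T : finType) (A : {set T}) (F : T -> nat) c :
  {in A, forall a, F a = c} -> {in ~: A, forall a, F a = 0} ->
  \sum_a F a = #|A| * c.
Proof.
move=> FA FnA; rewrite (bigID (mem A)) /= [X in _ + X]big1 ?addn0; last first.
  by move=> a nAa; apply: FnA; rewrite inE.
by rewrite -sum_nat_const; apply: eq_bigr.
Qed.

Section VertexLists.
Variables (R : realType) (G : graph R).
Implicit Types (x y z w : V G) (s : seq (V G)).

Lemma adjC x y : adj G x y = adj G y x.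
Proof. exact: adj_sym. Qed.

Lemma adj_neq x y : adj G x y -> x != y.
Proof. by apply: contraTneq => ->; rewrite adj_irr. Qed.

Variable x0 : V G.

Lemma is_cycle_seq n s : size s = n ->
  is_cycle (seq_ffun x0 n s) =
  (2 < n) && uniq s && all (fun m => adj G (nth x0 s m) (nth x0 (rot 1 s) m)) (iota 0 n).
Proof.
move=> size_s; rewrite /is_cycle injectiveb_seq_ffun // -forall_ord_iota.
by congr (_ && _); apply: eq_forallb => k; rewrite !ffunE nth_rot1 size_s.
Qed.

Lemma cycle_edges_seq n s : size s = n ->
  cycle_edges (seq_ffun x0 n s) =
  [set:: [seq [set nth x0 s m; nth x0 (rot 1 s) m] | m <- iota 0 n]].
Proof.
move=> size_s; rewrite -imset_ord_iota; apply: eq_imset => k.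
by rewrite !ffunE nth_rot1 size_s.
Qed.

Lemma is_path_seq n s : size s = n.+1 ->
  is_path (seq_ffun x0 n.+1 s) =
  (0 < n) && uniq s && all (fun m => adj G (nth x0 s m) (nth x0 s m.+1)) (iota 0 n).
Proof.
move=> size_s; rewrite /is_path injectiveb_seq_ffun // -forall_ord_iota.
by congr (_ && _); apply: eq_forallb => k; rewrite !ffunE lift0.
Qed.

Lemma path_edges_seq n s :
  path_edges (seq_ffun x0 n.+1 s) =
  [set:: [seq [set nth x0 s m; nth x0 s m.+1] | m <- iota 0 n]].
Proof. by rewrite -imset_ord_iota; apply: eq_imset => k; rewrite !ffunE lift0. Qed.

Lemma is_cycle3 x y z :
  is_cycle (seq_ffun x0 3 [:: x; y; z]) = [&& adj G x y, adj G y z & adj G z x].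
Proof.
rewrite is_cycle_seq //= !inE !andbT negb_or andb_idl // => /and3P[xy yz zx].
by rewrite (adj_neq xy) (adj_neq yz) eq_sym (adj_neq zx).
Qed.

Lemma is_cycle4 w x y z :
  is_cycle (seq_ffun x0 4 [:: w; x; y; z]) =
  [&& adj G w x, adj G x y, adj G y z, adj G z w, w != y & x != z].
Proof.
rewrite is_cycle_seq //= !inE !andbT !negb_or; apply/idP/idP.
  by case/and5P=> /and3P[/and3P[_ -> _] /andP[_ ->] _] -> -> -> ->.
case/and5P=> wx xy yz zw /andP[-> ->]; rewrite wx xy yz zw.
by rewrite (adj_neq wx) (adj_neq xy) (adj_neq yz) eq_sym (adj_neq zw).
Qed.

Lemma is_path2 x y z :
  is_path (seq_ffun x0 3 [:: x; y; z]) = [&& adj G x y, adj G y z & x != z].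
Proof.
rewrite is_path_seq //= !inE !andbT !negb_or; apply/idP/idP.
  by case/and3P=> /andP[/andP[_ ->] _] -> ->.
by case/and3P=> xy yz ->; rewrite xy yz (adj_neq xy) (adj_neq yz).
Qed.

Lemma is_path3 w x y z :
  is_path (seq_ffun x0 4 [:: w; x; y; z]) =
  [&& adj G w x, adj G x y, adj G y z, w != y, x != z & w != z].
Proof.
rewrite is_path_seq //= !inE !andbT !negb_or; apply/idP/idP.
  by case/and4P=> /and3P[/and3P[_ -> ->] /andP[_ ->] _] -> -> ->.
case/and5P=> wx xy yz -> /andP[-> ->]; rewrite wx xy yz.
by rewrite (adj_neq wx) (adj_neq xy) (adj_neq yz).
Qed.

End VertexLists.

Section Rotation.
Variables (R : realType) (G : graph R) (n : nat).
Implicit Types (f : {ffun 'I_n.+2 -> V G}) (r : 'I_n.+2).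

Definition rotate f r : {ffun 'I_n.+2 -> V G} := [ffun k => f (k + r)%R].

Lemma rotate_ord0 f r : rotate f r ord0 = f r.
Proof. by rewrite ffunE add0r. Qed.

Lemma ordS_addr (k r : 'I_n.+2) : (ordS k + r)%R = ordS (k + r)%R.
Proof. by rewrite -!(add_Zp_1 (p := n.+2)) addrAC. Qed.

(* [subrK] itself does not rewrite below: there the binders are typed by the
   finType structure of ['I_n.+2], which hides its ring structure. *)
Lemma subr_addK (k r : 'I_n.+2) : (k - r + r)%R = k.
Proof. exact: subrK. Qed.

Lemma is_cycle_rotate f r : is_cycle (rotate f r) = is_cycle f.
Proof.
rewrite /is_cycle; congr (_ && _ && _).
  apply/injectiveP/injectiveP => inj_f x y.
    move=> fxy; apply: (addIr (- r)%R); apply: inj_f.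
    by rewrite !ffunE !subr_addK.
  by rewrite !ffunE => /inj_f /addIr.
apply/forallP/forallP => adj_f k; last by rewrite !ffunE ordS_addr.
by have := adj_f (k - r)%R; rewrite !ffunE ordS_addr !subr_addK.
Qed.

Lemma cycle_edges_rotate f r : cycle_edges (rotate f r) = cycle_edges f.
Proof.
apply/setP => E; apply/imsetP/imsetP => -[k _ ->].
  by exists (k + r)%R => //; rewrite !ffunE ordS_addr.
by exists (k - r)%R => //; rewrite !ffunE ordS_addr !subr_addK.
Qed.

End Rotation.

Section Rooted.
Variables (R : realType) (G : graph R) (i : V G).

Definition rooted_cycles L :=
  [set f : {ffun 'I_L.+1 -> V G} | is_cycle f && (f ord0 == i)].

Definition rooted_paths L :=
  [set f : {ffun 'I_L.+1 -> V G} | is_path f && (f ord0 == i)].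

Lemma count_cycles_rooted n :
  count_cycles n.+2 i = #|[set cycle_edges f | f in rooted_cycles n.+1]|.
Proof.
apply: eq_card => E; rewrite inE; apply/existsP/imsetP.
  case=> f /and3P[cyc_f /existsP[r /eqP fr] /eqP ->]; exists (rotate f r).
    by rewrite inE is_cycle_rotate cyc_f rotate_ord0 fr eqxx.
  by rewrite cycle_edges_rotate.
case=> f; rewrite inE => /andP[cyc_f f0] ->; exists f.
by rewrite cyc_f eqxx andbT; apply/existsP; exists ord0.
Qed.

Lemma count_paths_rooted L :
  count_paths L i = #|[set path_edges f | f in rooted_paths L]|.
Proof.
apply: eq_card => E; rewrite inE; apply/existsP/imsetP.
  by case=> f /and3P[path_f f0 /eqP ->]; exists f; rewrite // inE path_f.
by case=> f; rewrite inE => /andP[path_f f0] ->; exists f; rewrite path_f f0 /=.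
Qed.

End Rooted.

Ltac case_vertex_eqs :=
  repeat match goal with
  | H : is_true (?x != ?x) |- _ => by rewrite eqxx in H
  | H : is_true (_ || _) |- _ => case/orP: H => H
  | H : is_true (_ && _) |- _ => case/andP: H => ? ?
  | H : is_true (?x == ?y) |- _ => move/eqP: H => H; try subst
  end;
  try solve [ done | by left | by right ].

Section RootedCounts.
Variables (R : realType) (G : graph R) (i : V G).
Implicit Types (a b c j : V G).

Definition nbrs j := [set k | adj G j k].
Definition common_nbrs j := [set k | adj G j k && adj G k i].

Definition cycles3 := [set t : V G * V G | [&& adj G i t.1, adj G t.1 t.2 & adj G t.2 i]].

Lemma rooted_cycles3E :
  rooted_cycles i 2 = [set seq_ffun i 3 [:: i; t.1; t.2] | t in cycles3].
Proof.
apply/setP => f; rewrite inE; apply/andP/imsetP => [[cyc_f /eqP f0]|[[a c] cyc ->]].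
  have f_vals : f = seq_ffun i 3 [:: i; f (inord 1); f (inord 2)].
    by rewrite {1}(seq_ffun_vals i f) f0.
  by exists (f (inord 1), f (inord 2)); rewrite // inE -(is_cycle3 i) -f_vals.
by move: cyc; rewrite inE is_cycle3 ffunE => ->.
Qed.

Lemma card_cycles3 : #|cycles3| = 2 * count_cycles 3 i.
Proof.
rewrite count_cycles_rooted rooted_cycles3E -imset_comp.
apply: (card_double_cover (sigma := fun t => (t.2, t.1)))
  => [[a c]|[a c] [a' c']|[a c] _]; rewrite /= ?inE //=.
- case/and3P=> ia ac ci; rewrite adjC ci adjC ac adjC ia; split=> //.
  by rewrite xpair_eqE negb_and eq_sym (adj_neq ac).
- move=> /and3P[ia ac ci] /and3P[ia' ac' ci'] E.
  have := adj_neq ia; have := adj_neq ac; have := adj_neq ci.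
  have := adj_neq ia'; have := adj_neq ac'; have := adj_neq ci'.
  have m1 : [set i; a] \in cycle_edges (seq_ffun i 3 [:: i; a'; c']).
    by rewrite -E cycle_edges_seq //= !inE eqxx.
  have m2 : [set c; i] \in cycle_edges (seq_ffun i 3 [:: i; a'; c']).
    by rewrite -E cycle_edges_seq //= !inE eqxx !orbT.
  move: m1 m2; clear E; rewrite cycle_edges_seq //= !inE !set2_eqE.
  move=> ? ? ? ? ? ? ? ?; case_vertex_eqs.
- rewrite !cycle_edges_seq //= [[set i; c]]setUC [[set c; a]]setUC [[set a; i]]setUC.
  by apply/setP => E; rewrite !inE; do 3 case: (E == _).
Qed.

Lemma card_cycles3_sum : #|cycles3| = \sum_j adj G j i * #|common_nbrs j|.
Proof.
rewrite (card_dep_pairs (fun a c => [&& adj G i a, adj G a c & adj G c i])).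
apply: eq_bigr => a _; rewrite [adj G a i]adjC; case: (boolP (adj G i a)) => ia.
  by rewrite mul1n; apply: eq_card => c; rewrite !inE.
by rewrite mul0n; apply/eqP; rewrite cards_eq0; apply/eqP/setP => c; rewrite !inE.
Qed.

(* In [cycles4] and [paths3] the vertex at distance two from [i] along the
   tuple comes first, so that [card_dep_pairs] sums over it. *)
Definition cycles4 := [set t : V G * (V G * V G) |
  [&& adj G i t.2.1, adj G t.2.1 t.1, adj G t.1 t.2.2, adj G t.2.2 i,
      i != t.1 & t.2.1 != t.2.2]].

Lemma rooted_cycles4E :
  rooted_cycles i 3 = [set seq_ffun i 4 [:: i; t.2.1; t.1; t.2.2] | t in cycles4].
Proof.
apply/setP => f; rewrite inE; apply/andP/imsetP => [[cyc_f /eqP f0]|[[b [a c]] cyc ->]].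
  have f_vals : f = seq_ffun i 4 [:: i; f (inord 1); f (inord 2); f (inord 3)].
    by rewrite {1}(seq_ffun_vals i f) f0.
  exists (f (inord 2), (f (inord 1), f (inord 3))) => //.
  by rewrite inE -(is_cycle4 i) -f_vals.
by move: cyc; rewrite inE is_cycle4 ffunE => ->.
Qed.

Lemma card_cycles4 : #|cycles4| = 2 * count_cycles 4 i.
Proof.
rewrite count_cycles_rooted rooted_cycles4E -imset_comp.
apply: (card_double_cover (sigma := fun t => (t.1, (t.2.2, t.2.1))))
  => [[b [a c]]|[b [a c]] [b' [a' c']]|[b [a c]] _]; rewrite /= ?inE //=.
- case/and5P=> ia ab bc ci /andP[ib ac].
  rewrite adjC ci adjC bc adjC ab adjC ia ib eq_sym ac; split=> //.
  by apply: contra ac; rewrite !xpair_eqE => /andP[_ /andP[/eqP -> _]].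
- move=> /and5P[ia ab bc ci /andP[ib ac]] /and5P[ia' ab' bc' ci' /andP[ib' ac']] E.
  have := adj_neq ia; have := adj_neq ab; have := adj_neq bc; have := adj_neq ci.
  have := adj_neq ia'; have := adj_neq ab'; have := adj_neq bc'; have := adj_neq ci'.
  have m1 : [set i; a] \in cycle_edges (seq_ffun i 4 [:: i; a'; b'; c']).
    by rewrite -E cycle_edges_seq //= !inE eqxx.
  have m2 : [set c; i] \in cycle_edges (seq_ffun i 4 [:: i; a'; b'; c']).
    by rewrite -E cycle_edges_seq //= !inE eqxx !orbT.
  have m3 : [set a; b] \in cycle_edges (seq_ffun i 4 [:: i; a'; b'; c']).
    by rewrite -E cycle_edges_seq //= !inE eqxx !orbT.
  move: m1 m2 m3; clear E; rewrite cycle_edges_seq //= !inE !set2_eqE.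
  move=> ? ? ? ? ? ? ? ? ? ? ?; case_vertex_eqs.
- rewrite !cycle_edges_seq //=.
  rewrite [[set i; c]]setUC [[set c; b]]setUC [[set b; a]]setUC [[set a; i]]setUC.
  by apply/setP => E; rewrite !inE; do 4 case: (E == _).
Qed.

Lemma card_cycles4_sum :
  #|cycles4| = \sum_j (j != i) * (#|common_nbrs j| * (#|common_nbrs j|).-1).
Proof.
rewrite (card_dep_pairs (fun b t => [&& adj G i t.1, adj G t.1 b, adj G b t.2,
  adj G t.2 i, i != b & t.1 != t.2])).
apply: eq_bigr => b _.
rewrite (card_dep_pairs (fun a c => [&& adj G i a, adj G a b, adj G b c,
  adj G c i, i != b & a != c])).
case: (eqVneq b i) => [->|_] /=.
  by rewrite big1 // => a _; apply/eqP; rewrite cards_eq0; apply/eqP/setP => c;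
    rewrite !inE !andbF.
rewrite mul1n; apply: sum_nat_const_on => a; rewrite !inE.
  case/andP=> ba ai; rewrite (cardsD1 a (common_nbrs b)) !inE ba ai /= add0n.
  apply: eq_card => c; rewrite !inE [adj G i a]adjC ai [adj G a b]adjC ba eq_sym.
  by case: (c == a); case: (adj G b c); case: (adj G c i).
rewrite negb_and => nba_ai; apply/eqP; rewrite cards_eq0; apply/eqP/setP => c.
by rewrite !inE; case/orP: nba_ai => /negbTE h;
  rewrite [adj G i a]adjC [adj G a b]adjC h /= ?andbF.
Qed.

Definition paths2 := [set t : V G * V G | [&& adj G i t.1, adj G t.1 t.2 & i != t.2]].

Lemma rooted_paths2E :
  rooted_paths i 2 = [set seq_ffun i 3 [:: i; t.1; t.2] | t in paths2].
Proof.
apply/setP => f; rewrite inE; apply/andP/imsetP => [[path_f /eqP f0]|[[a b] pth ->]].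
  have f_vals : f = seq_ffun i 3 [:: i; f (inord 1); f (inord 2)].
    by rewrite {1}(seq_ffun_vals i f) f0.
  by exists (f (inord 1), f (inord 2)); rewrite // inE -(is_path2 i) -f_vals.
by move: pth; rewrite inE is_path2 ffunE => ->.
Qed.

Lemma card_paths2 : #|paths2| = count_paths 2 i.
Proof.
rewrite count_paths_rooted rooted_paths2E -imset_comp; apply/esym/card_in_imset.
move=> [a b] [a' b']; rewrite !inE /= => /and3P[ia ab ib] /and3P[ia' ab' ib'] E.
have := adj_neq ia; have := adj_neq ab; have := adj_neq ia'; have := adj_neq ab'.
have m1 : [set i; a] \in path_edges (seq_ffun i 3 [:: i; a'; b']).
  by rewrite -E path_edges_seq /= !inE eqxx.
have m2 : [set a; b] \in path_edges (seq_ffun i 3 [:: i; a'; b']).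
  by rewrite -E path_edges_seq /= !inE eqxx !orbT.
move: m1 m2; clear E; rewrite path_edges_seq /= !inE !set2_eqE.
move=> ? ? ? ? ? ?; case_vertex_eqs.
Qed.

Lemma card_paths2_sum : #|paths2| = \sum_j adj G j i * (#|nbrs j|).-1.
Proof.
rewrite (card_dep_pairs (fun a b => [&& adj G i a, adj G a b & i != b])).
apply: eq_bigr => a _; rewrite [adj G a i]adjC; case: (boolP (adj G i a)) => ia.
  rewrite mul1n (cardsD1 i (nbrs a)) !inE adjC ia add1n /=.
  by apply: eq_card => c; rewrite !inE andbC eq_sym.
by rewrite mul0n; apply/eqP; rewrite cards_eq0; apply/eqP/setP => c; rewrite !inE.
Qed.

Definition paths3 := [set t : V G * (V G * V G) |
  [&& adj G i t.2.1, adj G t.2.1 t.1, adj G t.1 t.2.2, i != t.1,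
      t.2.1 != t.2.2 & i != t.2.2]].

Lemma rooted_paths3E :
  rooted_paths i 3 = [set seq_ffun i 4 [:: i; t.2.1; t.1; t.2.2] | t in paths3].
Proof.
apply/setP => f; rewrite inE; apply/andP/imsetP => [[path_f /eqP f0]|[[b [a c]] pth ->]].
  have f_vals : f = seq_ffun i 4 [:: i; f (inord 1); f (inord 2); f (inord 3)].
    by rewrite {1}(seq_ffun_vals i f) f0.
  exists (f (inord 2), (f (inord 1), f (inord 3))) => //.
  by rewrite inE -(is_path3 i) -f_vals.
by move: pth; rewrite inE is_path3 ffunE => ->.
Qed.

Lemma card_paths3 : #|paths3| = count_paths 3 i.
Proof.
rewrite count_paths_rooted rooted_paths3E -imset_comp; apply/esym/card_in_imset.
move=> [b [a c]] [b' [a' c']]; rewrite !inE /=.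
move=> /and5P[ia ab bc ib /andP[ac ic]] /and5P[ia' ab' bc' ib' /andP[ac' ic']] E.
have := adj_neq ia; have := adj_neq ab; have := adj_neq bc.
have := adj_neq ia'; have := adj_neq ab'; have := adj_neq bc'.
have m1 : [set i; a] \in path_edges (seq_ffun i 4 [:: i; a'; b'; c']).
  by rewrite -E path_edges_seq /= !inE eqxx.
have m2 : [set a; b] \in path_edges (seq_ffun i 4 [:: i; a'; b'; c']).
  by rewrite -E path_edges_seq /= !inE eqxx !orbT.
have m3 : [set b; c] \in path_edges (seq_ffun i 4 [:: i; a'; b'; c']).
  by rewrite -E path_edges_seq /= !inE eqxx !orbT.
move: m1 m2 m3; clear E; rewrite path_edges_seq /= !inE !set2_eqE.
move=> ? ? ? ? ? ? ? ? ?; case_vertex_eqs.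
Qed.

Lemma card_paths3_sum :
  #|paths3| = \sum_j (j != i) * (#|common_nbrs j| * (#|nbrs j| - 1 - adj G j i)).
Proof.
rewrite (card_dep_pairs (fun b t => [&& adj G i t.1, adj G t.1 b, adj G b t.2,
  i != b, t.1 != t.2 & i != t.2])).
apply: eq_bigr => b _.
rewrite (card_dep_pairs (fun a c => [&& adj G i a, adj G a b, adj G b c,
  i != b, a != c & i != c])).
case: (eqVneq b i) => [->|_] /=.
  by rewrite big1 // => a _; apply/eqP; rewrite cards_eq0; apply/eqP/setP => c;
    rewrite !inE !andbF.
rewrite mul1n; apply: sum_nat_const_on => a; rewrite !inE.
  case/andP=> ba ai; have ia : i != a by rewrite eq_sym (adj_neq ai).
  rewrite (cardsD1 a (nbrs b)) !inE ba add1n subn1 /=.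
  rewrite (cardsD1 i (nbrs b :\ a)) !inE ia /= [adj G b i]adjC addKn.
  apply: eq_card => c; rewrite !inE [adj G i a]adjC ai [adj G a b]adjC ba /=.
  by rewrite ![_ == c]eq_sym; case: (c == a); case: (c == i); case: (adj G b c).
rewrite negb_and => nba_ai; apply/eqP; rewrite cards_eq0; apply/eqP/setP => c.
by rewrite !inE; case/orP: nba_ai => /negbTE h;
  rewrite [adj G i a]adjC [adj G a b]adjC h /= ?andbF.
Qed.

End RootedCounts.

Section Within.
Variables (R : realType) (G : graph R) (i : V G).

Lemma within_refl n : within n i i.
Proof. by elim: n => //= n ->. Qed.

Lemma within_adj n j k : within n i j -> adj G j k -> within n.+1 i k.
Proof. by move=> ij jk /=; apply/orP; right; apply/existsP; exists j; rewrite ij jk. Qed.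

Lemma within_leq m n j : m <= n -> within m i j -> within n i j.
Proof. by move=> /subnK <-; elim: (n - m) => //= d IH ij; rewrite IH. Qed.

Lemma within1 j : adj G j i -> within 1 i j.
Proof. by move=> ji; apply: (within_adj (within_refl 0)); rewrite adjC. Qed.

Lemma within2 j k : adj G j k -> adj G k i -> within 2 i j.
Proof. by move=> jk ki; apply: (within_adj (within1 ki)); rewrite adjC. Qed.

End Within.

Local Open Scope ring_scope.

Section CountingMPNN.
Variables (R : realType) (F : R -> R -> R -> R -> R).

(* Round 1 sends [z_k; 1], where the identity label z_k is the last entry of
   h^(0)_k (it follows the arbitrary node attributes), and stores
   [l; x; d] = [z_j; sum of z_k; number of ego-network neighbours].
   Round 2 sends x_k and stores F l x d y with y = sum of x_k. *)
Definition count_msg t (hj hk e : seq R) : 'rV[R]_2 :=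
  if t is 0%N then \row_(x < 2) (if x == ord0 then last 0 hk else 1)
  else \row_(x < 2) nth 0 hk 1.

Definition count_upd t (h : seq R) (m : 'rV[R]_2) : seq R :=
  if t is 0%N then [:: last 0 h; m ord0 ord0; m ord0 ord_max]
  else [:: F (nth 0 h 0) (nth 0 h 1) (nth 0 h 2) (m ord0 ord0)].

Definition sum_heads (s : seq (seq R)) : seq R := [:: \sum_(x <- s) head 0 x].

Lemma sum_heads_perm s1 s2 : perm_eq s1 s2 -> sum_heads s1 = sum_heads s2.
Proof. by move=> s12; rewrite /sum_heads (perm_big _ s12). Qed.

Definition counting_mpnn : SubgraphMPNN R :=
  @MkSubgraphMPNN R (EgoNet 3) isT IdLabel 2 (fun _ => 2%N)
    count_msg count_upd sum_heads sum_heads_perm.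

Variables (G : graph R) (i : V G).

Definition ego_nbrs j := [set k | adj G j k && within 3 i k].

Lemma sub_adj_counting j k :
  sub_adj counting_mpnn i j k = [&& adj G j k, within 3 i j & within 3 i k].
Proof. by []. Qed.

Lemma sum_sub_adj_root j :
  \sum_(k | sub_adj counting_mpnn i j k) (i == k)%:R = (adj G j i)%:R :> R.
Proof.
case ji: (adj G j i).
  rewrite (bigD1 i) /=; last first.
    by rewrite sub_adj_counting ji within_refl (within_leq _ (within1 ji)).
  by rewrite eqxx big1 ?addr0 // => k /andP[_ /negbTE]; rewrite eq_sym => ->.
by rewrite big1 // => k; rewrite sub_adj_counting; case: eqP => // <-; rewrite ji.
Qed.

Lemma hstate1_counting j :
  hstate counting_mpnn 1 i j =
  [:: (i == j)%:R; (adj G j i)%:R; \sum_(k | sub_adj counting_mpnn i j k) 1].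
Proof.
rewrite /= /count_upd last_cat /= !summxE -sum_sub_adj_root; congr [:: _; _; _].
- by apply: eq_bigr => k _; rewrite mxE /= last_cat.
- by apply: eq_bigr => k _; rewrite mxE.
Qed.

Lemma hstateS_counting t j :
  hstate counting_mpnn t.+1 i j =
  count_upd t (hstate counting_mpnn t i j)
    (\sum_(k | sub_adj counting_mpnn i j k)
       count_msg t (hstate counting_mpnn t i j) (hstate counting_mpnn t i k) (eattr G j k)).
Proof. by []. Qed.

Lemma node_rep_counting :
  node_rep counting_mpnn i =
  [:: \sum_(j | within 3 i j)
        F (i == j)%:R (adj G j i)%:R #|ego_nbrs j|%:R #|common_nbrs i j|%:R].
Proof.
rewrite /node_rep; change (Rnode counting_mpnn) with sum_heads.
rewrite /sum_heads big_map big_enum; congr [:: _]; apply: eq_bigr => j ij.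
have {}ij : within 3 i j := ij.
rewrite hstateS_counting hstate1_counting.
set d := \sum_(k | _) 1; under eq_bigr => k _ do rewrite hstate1_counting.
rewrite /count_upd /count_msg /= summxE {}/d.
congr (F _ _ _ _).
  rewrite -sum1_card natr_sum; apply: eq_bigl => k.
  by rewrite sub_adj_counting inE ij.
rewrite -sum1_card natr_sum big_mkcond [RHS]big_mkcond; apply: eq_bigr => k _.
rewrite mxE sub_adj_counting inE ij andTb.
case: (boolP (adj G k i)) => [ki|_]; last by rewrite andbF; case: ifP.
by rewrite (within_leq _ (within1 ki)).
Qed.

End CountingMPNN.
Definition cycle3_readout {R : realType} (l x d y : R) := x * y.
Definition cycle4_readout {R : realType} (l x d y : R) := (1 - l) * (y * (y - 1)).
Definition path2_readout {R : realType} (l x d y : R) := x * (d - 1).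
Definition path3_readout {R : realType} (l x d y : R) := (1 - l) * (y * (d - 1 - x)).

Section Readouts.
Variables (R : realType) (G : graph R) (i : V G).

Lemma ego_nbrs_within2 j : within 2 i j -> ego_nbrs i j = nbrs j.
Proof.
move=> ij; apply/setP => k; rewrite !inE andb_idr // => jk.
exact: within_adj (within_leq _ ij) jk.
Qed.

Lemma common_nbrs_notwithin3 j : ~~ within 3 i j -> common_nbrs i j = set0.
Proof.
move=> nij; apply/setP => k; rewrite !inE; apply/negbTE; apply: contra nij.
by case/andP=> jk ki; apply: within_leq (within2 jk ki).
Qed.

Lemma adj_notwithin3 j : ~~ within 3 i j -> adj G j i = false.
Proof.
by move=> nij; apply/negbTE; apply: contra nij => ji; apply: within_leq (within1 ji).
Qed.

Lemma sum_within3_natr (h : V G -> R) (g : V G -> nat) :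
  (forall j, within 3 i j -> h j = (g j)%:R) ->
  (forall j, ~~ within 3 i j -> g j = 0%N) ->
  \sum_(j | within 3 i j) h j = (\sum_j g j)%:R.
Proof.
move=> hg g0; rewrite natr_sum big_mkcond; apply: eq_bigr => j _.
by case: (boolP (within 3 i j)) => ij; [rewrite hg | rewrite g0].
Qed.

Lemma one_minus_eq (j : V G) : 1 - (i == j)%:R = (j != i)%:R :> R.
Proof. by rewrite eq_sym; case: (j == i); rewrite ?subrr ?subr0. Qed.

Lemma node_rep_cycle3 :
  node_rep (counting_mpnn cycle3_readout) i = [:: (2 * count_cycles 3 i)%:R].
Proof.
rewrite node_rep_counting -card_cycles3 card_cycles3_sum; congr [:: _].
apply: sum_within3_natr => j ij; last by rewrite adj_notwithin3.
by rewrite /cycle3_readout natrM.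
Qed.

Lemma node_rep_cycle4 :
  node_rep (counting_mpnn cycle4_readout) i = [:: (2 * count_cycles 4 i)%:R].
Proof.
rewrite node_rep_counting -card_cycles4 card_cycles4_sum; congr [:: _].
apply: sum_within3_natr => j ij; last by rewrite common_nbrs_notwithin3 // cards0 muln0.
rewrite /cycle4_readout one_minus_eq !natrM; congr (_ * _).
by case: #|_| => [|n]; rewrite ?mul0r // -natr1 addrK.
Qed.

Lemma node_rep_path2 :
  node_rep (counting_mpnn path2_readout) i = [:: (count_paths 2 i)%:R].
Proof.
rewrite node_rep_counting -card_paths2 card_paths2_sum; congr [:: _].
apply: sum_within3_natr => j ij; last by rewrite adj_notwithin3.
rewrite /path2_readout; case: (boolP (adj G j i)) => ji; last by rewrite mul0r.
rewrite ego_nbrs_within2 ?(within_leq _ (within1 ji)) // !mul1r mul1n.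
have : (0 < #|nbrs j|)%N by apply/card_gt0P; exists i; rewrite inE.
by case: #|_| => // n _; rewrite -natr1 addrK.
Qed.

Lemma node_rep_path3 :
  node_rep (counting_mpnn path3_readout) i = [:: (count_paths 3 i)%:R].
Proof.
rewrite node_rep_counting -card_paths3 card_paths3_sum; congr [:: _].
apply: sum_within3_natr => j ij; last first.
  by rewrite common_nbrs_notwithin3 // cards0 mul0n muln0.
rewrite /path3_readout one_minus_eq; case: (boolP (j != i)) => ji; last by rewrite !mul0r.
case: (set_0Vmem (common_nbrs i j)) => [->|[a]].
  by rewrite cards0 !(mulr0n, mul0r, mulr0, mul0n, muln0).
rewrite inE => /andP[ja ai]; rewrite ego_nbrs_within2 ?(within2 ja ai) //.
have deg_ge : (1 + adj G j i <= #|nbrs j|)%N.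
  rewrite (cardsD1 a (nbrs j)) !inE ja leq_add2l (cardsD1 i (nbrs j :\ a)) !inE.
  by rewrite eq_sym (adj_neq ai) leq_addr.
by rewrite mul1r mul1n natrM -subnDA natrB // natrD opprD addrA.
Qed.

End Readouts.

Lemma can_count_node_of_rep (R : realType) (S : substructure) F (c : nat) :
  (0 < c)%N ->
  (forall (G : graph R) (i : V G),
     node_rep (counting_mpnn F) i = [:: (c * count_sub S i)%:R]) ->
  can_count_node R S.
Proof.
move=> c_gt0 rep G1 G2 i1 i2 neq; exists (counting_mpnn F); rewrite !rep => -[] /eqP.
by rewrite eqr_nat eqn_mul2l eqn0Ngt c_gt0 /= => /eqP.
Qed.

Theorem theorem1 (R : realType) :
  can_count_node R (Cycle 3) /\ can_count_node R (Cycle 4) /\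
  can_count_node R (Path 2) /\ can_count_node R (Path 3).
Proof.
split; first by apply: (can_count_node_of_rep (F := @cycle3_readout R) (c := 2%N))
  => // G i; rewrite node_rep_cycle3.
split; first by apply: (can_count_node_of_rep (F := @cycle4_readout R) (c := 2%N))
  => // G i; rewrite node_rep_cycle4.
split; first by apply: (can_count_node_of_rep (F := @path2_readout R) (c := 1%N))
  => // G i; rewrite node_rep_path2 mul1n.
by apply: (can_count_node_of_rep (F := @path3_readout R) (c := 1%N))
  => // G i; rewrite node_rep_path3 mul1n.
Qed.
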